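(* Let $\gamma\ge1$ be an integer, $C\subset\{0,1,\dots,p^\gamma-1\}$ nonempty (viewed both as a subset of $\mathbb{Z}/p^\gamma\mathbb{Z}$ and of $\mathbb{Z}_p$), and $\Omega=\bigsqcup_{c\in C}(c+p^\gamma\mathbb{Z}_p)$. The following are equivalent: (i) $\Omega$ tiles $\mathbb{Z}_p$, i.e. there is $T\subset\mathbb{Z}_p$ such that $\mathbb{Z}_p$ is the disjoint union of the sets $\Omega+t$, $t\in T$; (ii) $C$ tiles $\mathbb{Z}/p^\gamma\mathbb{Z}$; (iii) $\Omega$ tiles $\mathbb{Q}_p$.
   Context: $p\ge2$ is a prime. $\mathfrak{m}$ is the Haar measure on $\mathbb{Q}_p$. $C$ tiles $\mathbb{Z}/p^\gamma\mathbb{Z}$ if there is $S\subset\mathbb{Z}/p^\gamma\mathbb{Z}$ such that every element of $\mathbb{Z}/p^\gamma\mathbb{Z}$ is uniquely written as $c+s$ with $c\in C$, $s\in S$. $\Omega$ tiles $\mathbb{Q}_p$ if there is $T\subset\mathbb{Q}_p$ with $\sum_{t\in T}1_\Omega(x-t)=1$ for $\mathfrak{m}$-a.e. $x$. *)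

From HB Require Import structures.
From mathcomp Require Import all_boot all_order all_algebra.
Unset Printing Implicit Defensive.
Import Order.TTheory GRing.Theory Num.Theory.
Local Open Scope ring_scope.

Definition ppow (p : nat) (n : int) : rat := (p%:R : rat) ^ n.

Definition Zinvp (p : nat) (q : rat) : Prop :=
  exists k : nat, q * (p%:R ^+ k) \is a Num.int.

(* An element x of Q_p is represented by the family of its residues
   x mod p^n Z_p (n : int), each residue being given by its canonical
   representative in Z[1/p] /\ [0, p^n)   (Q_p / p^n Z_p = Z[1/p] / p^n Z). *)
Definition Qpseq := int -> rat.

Definition is_Qp (p : nat) (x : Qpseq) : Prop :=
  [/\ forall n, Zinvp p (x n),
      forall n, 0 <= x n < ppow p n,
      forall n, (x (n + 1) - x n) / ppow p n \is a Num.int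
    & exists N : int, forall n, n <= N -> x n = 0].

Definition qadd (p : nat) (x y : Qpseq) : Qpseq :=
  fun n => let s := x n + y n in if s < ppow p n then s else s - ppow p n.
Definition qopp (p : nat) (x : Qpseq) : Qpseq :=
  fun n => if x n == 0 then 0 else ppow p n - x n.
Definition qsub (p : nat) (x y : Qpseq) : Qpseq := qadd p x (qopp p y).
(* multiplication by p^k *)
Definition qscale (p : nat) (k : int) (x : Qpseq) : Qpseq :=
  fun n => ppow p k * x (n - k).
Definition qofnat (p : nat) (c : nat) : Qpseq :=
  fun n => match n with Posz k => ((c %% p ^ k)%N)%:R | Negz _ => 0 end.

(* Z_p = { x in Q_p | x = 0 mod Z_p } *)
Definition in_Zp (p : nat) (x : Qpseq) : Prop := is_Qp p x /\ x 0 = 0.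

Definition ball (p : nat) (a : Qpseq) (k : int) : Qpseq -> Prop :=
  fun x => exists z, in_Zp p z /\ x = qadd p a (qscale p k z).

Definition Omega (p gamma : nat) (C : {set 'Z_(p ^ gamma)%N}) : Qpseq -> Prop :=
  fun x => exists c, c \in C /\ ball p (qofnat p (val c)) gamma%:Z x.

(* Haar-null subsets of Q_p: coverable by countably many balls of total
   Haar measure (m(a + p^k Z_p) = p^(-k)) at most eps, for every eps > 0 *)
Definition haar_null (p : nat) (N : Qpseq -> Prop) : Prop :=
  forall eps : rat, 0 < eps ->
    exists (a : nat -> Qpseq) (k : nat -> int),
      [/\ forall i, is_Qp p (a i),
          forall x, N x -> exists i, ball p (a i) (k i) x
        & forall m, \sum_(i < m) ppow p (- k i) <= eps].

(* Omega tiles Q_p: sum_{t in T} 1_Omega(x - t) = 1 for a.e. x, i.e. for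
   almost every x there is exactly one t in T with x - t in Omega *)
Definition tiles_Qp (p : nat) (Om : Qpseq -> Prop) : Prop :=
  exists T : Qpseq -> Prop,
    (forall t, T t -> is_Qp p t) /\
    haar_null p (fun x => is_Qp p x /\ ~ (exists! t, T t /\ Om (qsub p x t))).

Definition tiles_Zp (p : nat) (Om : Qpseq -> Prop) : Prop :=
  exists T : Qpseq -> Prop,
    [/\ forall t, T t -> in_Zp p t,
        forall t w, T t -> Om w -> in_Zp p (qadd p w t)
      & forall x, in_Zp p x ->
          exists! t, T t /\ exists w, Om w /\ x = qadd p w t].

Definition tiles_Zmod (n : nat) (C : {set 'Z_n}) : Prop :=
  exists S : {set 'Z_n}, forall x : 'Z_n,
    exists! cs : 'Z_n * 'Z_n, [/\ cs.1 \in C, cs.2 \in S & x = cs.1 + cs.2].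

From HB Require Import structures.
From mathcomp Require Import all_boot all_order all_algebra.
From mathcomp Require Import zify ring lra boolp.
Set Implicit Arguments.
Unset Strict Implicit.
Unset Printing Implicit Defensive.
Import Order.TTheory GRing.Theory Num.Theory.
Local Open Scope ring_scope.

(* Let [X] and [Y] be the residues modulo [p^gamma] of the integral parts of
   [x] and [t] in [Q_p].  Then [x - t] lies in [Omega] exactly when [x] and [t]
   have the same fractional part and [X - Y] lies in [C], so a tiling set of
   [Z_p] yields the tiling set of its residues, and a tiling set [S] of
   [Z/p^gamma Z] lifts to [{r + s | s in S}], where [r = 0] for [Z_p] and [r]
   ranges over the fractional parts [Z[1/p] \cap [0, 1)] for [Q_p]; the latter
   tiles [Q_p] with no exceptional point at all.  Conversely, a tiling of [Q_p]
   up to a Haar-null set still induces a tiling of [Z/p^gamma Z], because a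
   ball is never Haar-null: a countable cover by balls of total mass below
   that of the ball misses a point of it, found by always descending into a
   subball that the cover does not exhaust (Konig's lemma). *)

Section Representatives.
Variable R : archiRealFieldType.
Implicit Types a b q P Q : R.

Lemma int_le_of_lt_add1 a b :
  a \is a Num.int -> b \is a Num.int -> a < b + 1 -> a <= b.
Proof.
move=> /intrP[m ->] /intrP[n ->]; rewrite -(intrD _ n 1) !ltr_int !ler_int; lia.
Qed.

Definition modq q P : R := q - P * (Num.floor (q / P))%:~R.

Lemma modq_ge0 q P : 0 < P -> 0 <= modq q P.
Proof. by move=> P0; rewrite /modq subr_ge0 -ler_pdivlMl // mulrC floor_le. Qed.

Lemma modq_lt q P : 0 < P -> modq q P < P.
Proof.
move=> P0; rewrite /modq; set f := Num.floor (q / P).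
have lt_f : q / P < f%:~R + 1 by have := floorD1_gt (q / P); rewrite intrD.
have : P * (q / P) < P * (f%:~R + 1) by rewrite ltr_pM2l.
rewrite mulrC divfK ?gt_eqF //; lra.
Qed.

Lemma modq_diff q P : 0 < P -> (q - modq q P) / P \is a Num.int.
Proof.
move=> P0; have -> : (q - modq q P) / P = (Num.floor (q / P))%:~R.
  by rewrite /modq; field; rewrite gt_eqF.
exact: intr_int.
Qed.

Lemma modq_char a q P : 0 <= a < P -> (q - a) / P \is a Num.int -> modq q P = a.
Proof.
move=> /andP[a_ge0 a_lt] qa_int; have P0 : 0 < P by apply: le_lt_trans a_lt.
have [m_ge0 m_lt] := (modq_ge0 q P0, modq_lt q P0).
have diff_int : (a - modq q P) / P \is a Num.int.
  have -> : (a - modq q P) / P = (q - modq q P) / P - (q - a) / P.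
    by field; rewrite gt_eqF.
  by apply: rpredB => //; exact: modq_diff.
have : (a - modq q P) / P = 0.
  apply/eqP; rewrite eq_le; apply/andP; split.
    apply: int_le_of_lt_add1; rewrite ?rpred0 // add0r ltr_pdivrMr //; lra.
  apply: int_le_of_lt_add1; rewrite ?rpred0 //.
  by rewrite -ltrBlDr sub0r ltr_pdivlMr // mulN1r; lra.
by move/eqP; rewrite mulf_eq0 invr_eq0 (gt_eqF P0) orbF subr_eq0 => /eqP.
Qed.

Lemma modq_small a P : 0 <= a < P -> modq a P = a.
Proof. by move=> a_rng; apply: modq_char; rewrite // subrr mul0r rpred0. Qed.

Lemma modq_shift q P z : 0 < P -> z \is a Num.int -> modq (q + P * z) P = modq q P.
Proof.
move=> P0 z_int; apply: modq_char; first by rewrite modq_ge0 ?modq_lt.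
have -> : (q + P * z - modq q P) / P = (q - modq q P) / P + z.
  by field; rewrite gt_eqF.
by apply: rpredD => //; exact: modq_diff.
Qed.

Lemma modq_mod q P Q : 0 < P -> 0 < Q -> Q / P \is a Num.int ->
  modq (modq q Q) P = modq q P.
Proof.
move=> P0 Q0 QP_int; apply: modq_char; first by rewrite modq_ge0 ?modq_lt.
have -> : (modq q Q - modq q P) / P =
    (q - modq q P) / P - ((q - modq q Q) / Q) * (Q / P).
  by field; rewrite (gt_eqF P0) (gt_eqF Q0).
by apply: rpredB; [exact: modq_diff | apply: rpredM => //; exact: modq_diff].
Qed.

End Representatives.

Lemma frac_nat_inj (r r' : rat) (m m' : nat) : 0 <= r < 1 -> 0 <= r' < 1 ->
  r + m%:R = r' + m'%:R -> r = r' /\ m = m'.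
Proof.
move=> /andP[? ?] /andP[? ?] e.
have le_nat (u v : nat) : u%:R < v%:R + 1 :> rat -> (u <= v)%N.
  by move/(int_le_of_lt_add1 (natr_int _ _) (natr_int _ _)); rewrite ler_nat.
have /eqP e_m : m == m' by rewrite eqn_leq !le_nat //; lra.
by split=> //; move: e; rewrite e_m => /addIr.
Qed.

Section ModularArithmetic.
Variable R : realFieldType.
Implicit Types P a b r v : R.

Definition addm P a b : R := if a + b < P then a + b else a + b - P.
Definition oppm P a : R := if a == 0 then 0 else P - a.

Ltac no_if t := lazymatch t with context [if _ then _ else _] => fail | _ => idtac end.

Ltac unfold_mod := rewrite ?/addm ?/oppm;
  repeat match goal with
  | |- context [if ?a < ?b then _ else _] =>
      no_if a; no_if b; case: (ltrP a b) => ? /=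
  | |- context [if ?a == ?b then _ else _] =>
      no_if a; no_if b; case: (eqVneq a b) => [?|/lt_total/orP[?|?]] /=
  end; try lra.

Lemma addm_eps P a b : exists e : bool, addm P a b = a + b - e%:R * P.
Proof.
rewrite /addm; case: ifP => _; [exists false | exists true];
  by rewrite /= ?mul0r ?mul1r ?subr0.
Qed.

Lemma oppm_eps P a : exists e : bool, oppm P a = e%:R * P - a.
Proof.
rewrite /oppm; case: eqP => [->|_]; [exists false | exists true];
  by rewrite /= ?mul0r ?mul1r ?subr0.
Qed.

Section InRange.
Variables (P a b : R).
Hypotheses (a_rng : 0 <= a < P) (b_rng : 0 <= b < P).

Lemma addm_rng : 0 <= addm P a b < P.
Proof. by case/andP: a_rng b_rng => ? ? /andP[? ?]; unfold_mod. Qed.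

Lemma oppm_rng : 0 <= oppm P a < P.
Proof. by case/andP: a_rng => ? ?; unfold_mod; subst; lra. Qed.

Lemma addm0 : addm P a 0 = a.
Proof. by case/andP: a_rng => ? ?; unfold_mod. Qed.

Lemma addm_oppv : addm P a (oppm P a) = 0.
Proof. by case/andP: a_rng => ? ?; unfold_mod; subst; lra. Qed.

Lemma addm_subK : addm P (addm P a (oppm P b)) b = a.
Proof. by case/andP: a_rng b_rng => ? ? /andP[? ?]; unfold_mod; subst; lra. Qed.

Lemma addm_subKC : addm P b (addm P a (oppm P b)) = a.
Proof. by case/andP: a_rng b_rng => ? ? /andP[? ?]; unfold_mod; subst; lra. Qed.

Lemma addm_addK : addm P (addm P a b) (oppm P b) = a.
Proof. by case/andP: a_rng b_rng => ? ? /andP[? ?]; unfold_mod; subst; lra. Qed.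

Lemma addm_sub_eq v : 0 <= v < P ->
  (addm P a (oppm P b) = v) <-> (b = addm P a (oppm P v)).
Proof.
case/andP: a_rng b_rng => ? ? /andP[? ?] /andP[? ?].
by split=> e; [rewrite -e | rewrite e]; unfold_mod; subst; lra.
Qed.

End InRange.

Lemma addm_fracl P r a c : 0 <= r < 1 -> 0 <= a -> a + 1 <= P -> 0 <= c < P ->
  (a < c -> a + 1 <= c) ->
  addm P (r + a) (oppm P c) = r + addm P a (oppm P c).
Proof.
move=> /andP[? ?] ? ? /andP[? ?] ac.
by case: (ltrP a c) => [/ac ?|?]; unfold_mod; subst; lra.
Qed.

End ModularArithmetic.

Lemma ppow0 p : ppow p 0 = 1.
Proof. exact: expr0z. Qed.

Section Powers.
Variable p : nat.
Hypothesis p_gt0 : (0 < p)%N.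

Lemma p_unit : (p%:R : rat) \is a GRing.unit.
Proof. by rewrite unitfE pnatr_eq0 -lt0n. Qed.

Lemma ppow_gt0 n : 0 < ppow p n.
Proof. by apply: exprz_gt0; rewrite ltr0n. Qed.

Lemma ppow_neq0 n : ppow p n != 0.
Proof. by rewrite gt_eqF ?ppow_gt0. Qed.

Lemma ppowD m n : ppow p (m + n) = ppow p m * ppow p n.
Proof. exact/exprzDr/p_unit. Qed.

Lemma ppowS n : ppow p (n + 1) = ppow p n * p%:R.
Proof. by rewrite ppowD /ppow expr1z. Qed.

Lemma ppowN n : ppow p (- n) = (ppow p n)^-1.
Proof. by rewrite /ppow invr_expz. Qed.

Lemma ppow_int n : 0 <= n -> ppow p n \is a Num.int.
Proof. by case: n => // k _; rewrite /ppow rpredX ?natr_int. Qed.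

Lemma ppow_divr_int m n : m <= n -> ppow p n / ppow p m \is a Num.int.
Proof.
move=> le_mn; rewrite -(subrK m n) ppowD mulfK ?ppow_neq0 //.
by rewrite ppow_int // subr_ge0.
Qed.

Lemma ppow_le m n : m <= n -> ppow p m <= ppow p n.
Proof.
move=> le_mn; rewrite -(subrK m n) ppowD ler_peMl ?(ltW (ppow_gt0 m)) //.
have : 0 <= n - m by rewrite subr_ge0.
by case: (n - m) => // k _; rewrite [ppow _ _]/(p%:R ^+ k) exprn_ege1 // ler1n.
Qed.

(* A ball of level [j] is the disjoint union of [p] balls of level [j + 1]. *)
Lemma ppow_split j : ppow p (- j) = ppow p (- (j + 1)) *+ p.
Proof. by rewrite -mulr_natr -ppowS; congr ppow; ring. Qed.

Lemma Zinvp_int q : q \is a Num.int -> Zinvp p q.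
Proof. by move=> q_int; exists 0%N; rewrite expr0 mulr1. Qed.

Lemma Zinvp_add a b : Zinvp p a -> Zinvp p b -> Zinvp p (a + b).
Proof.
have mono q k l : q * p%:R ^+ k \is a Num.int -> (k <= l)%N -> q * p%:R ^+ l \is a Num.int.
  by move=> q_int le_kl; rewrite -(subnKC le_kl) exprD mulrA rpredM ?rpredX ?natr_int.
move=> [k a_int] [l b_int]; exists (maxn k l); rewrite mulrDl rpredD //.
  by apply: mono a_int _; rewrite leq_maxl.
by apply: mono b_int _; rewrite leq_maxr.
Qed.

Lemma Zinvp_opp a : Zinvp p a -> Zinvp p (- a).
Proof. by move=> [k a_int]; exists k; rewrite mulNr rpredN. Qed.

Lemma Zinvp_mul a b : Zinvp p a -> Zinvp p b -> Zinvp p (a * b).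
Proof.
move=> [k a_int] [l b_int]; exists (k + l)%N.
by rewrite exprD mulrACA rpredM.
Qed.

Lemma Zinvp_ppow n : Zinvp p (ppow p n).
Proof.
case: n => k; first exact/Zinvp_int/ppow_int.
exists k.+1; rewrite /ppow NegzE -exprnN mulVf ?rpred1 //.
by rewrite expf_neq0 // pnatr_eq0 -lt0n.
Qed.

End Powers.

Section QpElements.
Variable p : nat.
Hypothesis p_gt0 : (0 < p)%N.
Implicit Types x y a t w z : Qpseq.

Lemma Qp_Zinvp x n : is_Qp p x -> Zinvp p (x n).
Proof. by case. Qed.

Lemma Qp_rng x n : is_Qp p x -> 0 <= x n < ppow p n.
Proof. by case. Qed.

Lemma Qp_cong x n : is_Qp p x -> (x (n + 1) - x n) / ppow p n \is a Num.int.
Proof. by case. Qed.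

Lemma Qp_down x m n : is_Qp p x -> m <= n -> x m = modq (x n) (ppow p m).
Proof.
move=> x_Qp le_mn; rewrite -(subrK m n) addrC.
have : 0 <= n - m by rewrite subr_ge0.
case: (n - m) => // d _; elim: d => [|d IHd].
  by rewrite addr0 modq_small // Qp_rng.
have step : x (m + d) = modq (x (m + d + 1)) (ppow p (m + d)).
  by rewrite (modq_char (Qp_rng _ x_Qp)) ?Qp_cong.
rewrite IHd step modq_mod ?ppow_gt0 ?ppow_divr_int ?lerDl //.
by rewrite -addn1 PoszD addrA.
Qed.

Lemma Qp_agree x y m n : is_Qp p x -> is_Qp p y -> m <= n -> x n = y n -> x m = y m.
Proof. by move=> x_Qp y_Qp le_mn e; rewrite (Qp_down x_Qp le_mn) (Qp_down y_Qp le_mn) e. Qed.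

Lemma qaddE x y n : qadd p x y n = addm (ppow p n) (x n) (y n).
Proof. by []. Qed.

Lemma qoppE x n : qopp p x n = oppm (ppow p n) (x n).
Proof. by []. Qed.

Lemma qsubE x y n : qsub p x y n = addm (ppow p n) (x n) (oppm (ppow p n) (y n)).
Proof. by []. Qed.

Lemma is_Qp_add x y : is_Qp p x -> is_Qp p y -> is_Qp p (qadd p x y).
Proof.
move=> x_Qp y_Qp; split=> [n|n|n|]; rewrite ?qaddE.
- have [e ->] := addm_eps (ppow p n) (x n) (y n).
  apply: Zinvp_add; first by apply: Zinvp_add; apply: Qp_Zinvp.
  by apply/Zinvp_opp/Zinvp_mul; [apply/Zinvp_int/natr_int | apply: Zinvp_ppow].
- by apply: addm_rng; apply: Qp_rng.
- have [e ->] := addm_eps (ppow p n) (x n) (y n).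
  have [e' ->] := addm_eps (ppow p (n + 1)) (x (n + 1)) (y (n + 1)).
  have [cx cy] := (Qp_cong n x_Qp, Qp_cong n y_Qp).
  have -> : (x (n + 1) + y (n + 1) - e'%:R * ppow p (n + 1)
        - (x n + y n - e%:R * ppow p n)) / ppow p n
      = (x (n + 1) - x n) / ppow p n + (y (n + 1) - y n) / ppow p n
        - e'%:R * p%:R + e%:R.
    by rewrite ppowS //; field; rewrite ppow_neq0.
  by rewrite rpredD ?rpredB ?rpredM ?rpredD ?natr_int.
- case: x_Qp y_Qp => _ _ _ [N1 x0] [_ _ _ [N2 y0]].
  exists (Num.min N1 N2) => n; rewrite le_min => /andP[n1 n2].
  by rewrite qaddE x0 ?y0 ?addm0 ?lexx ?ppow_gt0.
Qed.

Lemma is_Qp_opp x : is_Qp p x -> is_Qp p (qopp p x).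
Proof.
move=> x_Qp; split=> [n|n|n|]; rewrite ?qoppE.
- have [e ->] := oppm_eps (ppow p n) (x n).
  apply: Zinvp_add; last exact/Zinvp_opp/Qp_Zinvp.
  by apply: Zinvp_mul; [apply/Zinvp_int/natr_int | apply: Zinvp_ppow].
- by apply: oppm_rng; apply: Qp_rng.
- have [e ->] := oppm_eps (ppow p n) (x n).
  have [e' ->] := oppm_eps (ppow p (n + 1)) (x (n + 1)).
  have cx := Qp_cong n x_Qp.
  have -> : (e'%:R * ppow p (n + 1) - x (n + 1) - (e%:R * ppow p n - x n)) / ppow p n
      = e'%:R * p%:R - e%:R - (x (n + 1) - x n) / ppow p n.
    by rewrite ppowS //; field; rewrite ppow_neq0.
  by apply: rpredB => //; rewrite rpredB ?rpredM ?natr_int.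
- case: x_Qp => _ _ _ [N x0].
  by exists N => n n_le; rewrite qoppE x0 // /oppm eqxx.
Qed.

Lemma is_Qp_sub x y : is_Qp p x -> is_Qp p y -> is_Qp p (qsub p x y).
Proof. by move=> x_Qp y_Qp; apply: is_Qp_add => //; apply: is_Qp_opp. Qed.

Lemma is_Qp_scale k x : is_Qp p x -> is_Qp p (qscale p k x).
Proof.
move=> x_Qp; split=> [n|n|n|]; rewrite /qscale.
- by apply: Zinvp_mul; [apply: Zinvp_ppow | apply: Qp_Zinvp].
- have [? ?] := andP (Qp_rng (n - k) x_Qp).
  have -> : ppow p n = ppow p k * ppow p (n - k) by rewrite -ppowD // addrC subrK.
  by rewrite mulr_ge0 ?(ltW (ppow_gt0 _ _)) //= ltr_pM2l ?ppow_gt0.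
- have -> : ppow p n = ppow p k * ppow p (n - k) by rewrite -ppowD // addrC subrK.
  rewrite addrAC -mulrBr invfM mulrACA divff ?ppow_neq0 // mul1r.
  exact: Qp_cong.
- case: x_Qp => _ _ _ [N x0].
  by exists (N + k) => n n_le; rewrite x0 ?mulr0 // lerBlDr.
Qed.

Definition qofrat (q : rat) : Qpseq := fun n => modq q (ppow p n).

Lemma is_Qp_qofrat q : Zinvp p q -> is_Qp p (qofrat q).
Proof.
move=> q_Zinvp; split=> [n|n|n|]; rewrite /qofrat.
- rewrite /modq; apply/Zinvp_add/Zinvp_opp/Zinvp_mul => //; first exact: Zinvp_ppow.
  exact/Zinvp_int/intr_int.
- by rewrite modq_ge0 ?modq_lt ?ppow_gt0.
- have -> : (modq q (ppow p (n + 1)) - modq q (ppow p n)) / ppow p n =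
      (q - modq q (ppow p n)) / ppow p n
      - (q - modq q (ppow p (n + 1))) / ppow p (n + 1) * p%:R.
    by rewrite ppowS //; field; rewrite ppow_neq0 // pnatr_eq0 -lt0n p_gt0.
  by apply: rpredB; [|apply: rpredM; rewrite ?natr_int //]; apply/modq_diff/ppow_gt0.
- case: q_Zinvp => k k_int; exists (- k%:Z) => n n_le.
  have -> : q = 0 + ppow p n * (q * ppow p k * ppow p (- n - k%:Z)).
    rewrite add0r mulrCA -mulrA -!ppowD //.
    by rewrite (_ : k%:Z + (n + (- n - k%:Z)) = 0) ?ppow0 ?mulr1 //; ring.
  rewrite modq_shift ?ppow_gt0 ?modq_small ?lexx ?ppow_gt0 //.
  by rewrite rpredM ?ppow_int // subr_ge0 -lerNr.
Qed.

Lemma qofnatE c : qofnat p c = qofrat c%:R.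
Proof.
apply: funext => -[k|k]; apply/esym/modq_char.
- rewrite -[qofnat p c k]/((c %% p ^ k)%N%:R) -[ppow p k]/(p%:R ^+ k).
  by rewrite ler0n /= -natrX ltr_nat ltn_pmod // expn_gt0 p_gt0.
- rewrite -[qofnat p c k]/((c %% p ^ k)%N%:R) -[ppow p k]/(p%:R ^+ k).
  rewrite {1}(divn_eq c (p ^ k)) natrD addrK natrM -natrX mulfK ?natr_int //.
  by rewrite pnatr_eq0 -lt0n expn_gt0 p_gt0.
- by rewrite lexx ppow_gt0.
- by rewrite subr0 /ppow NegzE -exprnN invrK rpredM ?rpredX ?natr_int.
Qed.

Lemma is_Qp_qofnat c : is_Qp p (qofnat p c).
Proof. by rewrite qofnatE; apply/is_Qp_qofrat/Zinvp_int/natr_int. Qed.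

Lemma qofnat_small c (k : nat) : (c < p ^ k)%N -> qofnat p c k = c%:R.
Proof. by move=> lt_c; rewrite /qofnat modn_small. Qed.

Lemma qofnat0 c : qofnat p c 0 = 0.
Proof. by rewrite -[qofnat p c 0]/((c %% 1)%N%:R) modn1. Qed.

Lemma qadd_subK x t : is_Qp p x -> is_Qp p t -> qadd p (qsub p x t) t = x.
Proof. by move=> x_Qp t_Qp; apply: funext => n; rewrite qaddE addm_subK ?Qp_rng. Qed.

Lemma qsub_addK w t : is_Qp p w -> is_Qp p t -> qsub p (qadd p w t) t = w.
Proof. by move=> w_Qp t_Qp; apply: funext => n; rewrite qsubE addm_addK ?Qp_rng. Qed.

Lemma qadd_subKC a x : is_Qp p a -> is_Qp p x -> qadd p a (qsub p x a) = x.
Proof. by move=> a_Qp x_Qp; apply: funext => n; rewrite qaddE addm_subKC ?Qp_rng. Qed.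

Lemma ballP a k x : is_Qp p a -> ball p a k x <-> is_Qp p x /\ x k = a k.
Proof.
move=> a_Qp; split=> [[z [[z_Qp z0] ->]]|[x_Qp x_k]].
  split; first exact/is_Qp_add/is_Qp_scale.
  by rewrite qaddE /qscale subrr z0 mulr0 addm0 ?Qp_rng.
exists (qscale p (- k) (qsub p x a)); split.
  split; first exact/is_Qp_scale/is_Qp_sub.
  by rewrite /qscale sub0r opprK qsubE x_k addm_oppv ?mulr0 ?Qp_rng.
rewrite -[LHS](qadd_subKC a_Qp x_Qp); congr qadd; apply: funext => n.
by rewrite /qscale opprK subrK mulrA -ppowD // subrr ppow0 mul1r.
Qed.

End QpElements.

Section BallsAreNotNull.
Variable p : nat.
Hypothesis p_gt0 : (0 < p)%N.
Variables (a : nat -> Qpseq) (k : nat -> int).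
Hypothesis a_Qp : forall i, is_Qp p (a i).
Implicit Types c d x : Qpseq.

(* The center of the [e]-th ball of level [j + 1] inside the ball [c + p^j Z_p]. *)
Definition subball c j (e : nat) : Qpseq := qofrat p (c j + e%:R * ppow p j).

Lemma is_Qp_subball c j e : is_Qp p c -> is_Qp p (subball c j e).
Proof.
move=> c_Qp; apply: (is_Qp_qofrat p_gt0); apply: Zinvp_add; first exact: Qp_Zinvp.
by apply: Zinvp_mul; [apply/Zinvp_int/natr_int | exact: Zinvp_ppow].
Qed.

Lemma subball_low c j e l : is_Qp p c -> l <= j -> subball c j e l = c l.
Proof.
move=> c_Qp le_lj; apply: (Qp_agree p_gt0 (is_Qp_subball j e c_Qp) c_Qp le_lj).
rewrite /subball /qofrat mulrC modq_shift ?natr_int ?ppow_gt0 //.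
by rewrite modq_small ?Qp_rng.
Qed.

Lemma subball_next c j e : is_Qp p c -> (e < p)%N ->
  subball c j e (j + 1) = c j + e%:R * ppow p j.
Proof.
move=> c_Qp lt_ep; rewrite /subball /qofrat modq_small // ppowS //.
have [? ?] := andP (Qp_rng j c_Qp); have P0 := ppow_gt0 p_gt0 j.
have : (e%:R + 1) * ppow p j <= p%:R * ppow p j by rewrite ler_pM2r // natr1 ler_nat.
have : 0 <= e%:R * ppow p j :> rat by rewrite mulr_ge0 ?ler0n ?ltW.
by move=> ? ?; apply/andP; split; nra.
Qed.

Lemma Qp_digit x j : is_Qp p x ->
  exists2 b : nat, (b < p)%N & x (j + 1) = x j + b%:R * ppow p j.
Proof.
move=> x_Qp; have P0 := ppow_gt0 p_gt0 j.
set beta := (x (j + 1) - x j) / ppow p j.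
have beta_int : beta \is a Num.int by apply: Qp_cong.
have e_beta : x (j + 1) = x j + beta * ppow p j by rewrite divfK ?gt_eqF //; ring.
have [? ?] := andP (Qp_rng j x_Qp); have := Qp_rng (j + 1) x_Qp.
rewrite ppowS // e_beta => /andP[? ?].
have beta_ge0 : 0 <= beta.
  apply: int_le_of_lt_add1; rewrite ?rpred0 // -(ltr_pM2r P0); nra.
have beta_lt : beta < p%:R by rewrite -(ltr_pM2r P0); nra.
have /natrP[b e_b] : beta \is a Num.nat by rewrite natrEint beta_int.
by exists b; rewrite -?(ltr_nat rat) -?e_b.
Qed.

Lemma sum_subball_eq c x j (w : rat) : is_Qp p c -> is_Qp p x ->
  \sum_(e < p) (if subball c j e (j + 1) == x (j + 1) then w else 0)
  = if x j == c j then w else 0.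
Proof.
move=> c_Qp x_Qp; have [b lt_bp x_next] := Qp_digit j x_Qp.
case: eqP => [xc|xc].
  rewrite (bigD1 (Ordinal lt_bp)) //= subball_next // x_next xc eqxx big1 ?addr0 //.
  move=> e /eqP ne_eb; rewrite subball_next ?ltn_ord //.
  case: eqP => // /addrI/(mulIf (ppow_neq0 p_gt0 j))/eqP; rewrite eqr_nat => /eqP eb.
  by case: ne_eb; apply: val_inj.
rewrite big1 // => e _; case: eqP => // same; case: xc.
rewrite -(subball_low e c_Qp (lexx j)).
exact: (Qp_agree p_gt0 x_Qp (is_Qp_subball j e c_Qp) (lerDl j 1)).
Qed.

(* The Haar measure of [(a i + p^(k i) Z_p) \cap (c + p^j Z_p)]. *)
Definition ball_mass i c j : rat :=
  if k i <= j then (if c (k i) == a i (k i) then ppow p (- j) else 0)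
  else (if a i j == c j then ppow p (- k i) else 0).

Definition cover_mass m c j : rat := \sum_(i < m) ball_mass i c j.

Definition uncovered c j := forall m, cover_mass m c j < ppow p (- j).

Lemma ball_mass_ge0 i c j : 0 <= ball_mass i c j.
Proof. by rewrite /ball_mass; repeat case: ifP => _; rewrite ?lexx ?ltW ?ppow_gt0. Qed.

Lemma ball_mass_le i c j : ball_mass i c j <= ppow p (- k i).
Proof.
rewrite /ball_mass; case: ifP => le_kj; case: ifP => _;
  rewrite ?lexx ?(ltW (ppow_gt0 p_gt0 _)) //.
by apply: (ppow_le p_gt0); rewrite lerN2.
Qed.

Lemma ball_mass_split i c j : is_Qp p c ->
  ball_mass i c j = \sum_(e < p) ball_mass i (subball c j e) (j + 1).
Proof.
move=> c_Qp; rewrite /ball_mass; case: (lerP (k i) j) => [le_kj|lt_jk].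
  have le_kj1 : k i <= j + 1 by rewrite (le_trans le_kj) ?lerDl.
  under eq_bigr => e _ do rewrite le_kj1 subball_low //.
  by rewrite sumr_const card_ord; case: eqP; rewrite ?mul0rn // ppow_split.
case: (lerP (k i) (j + 1)) => [le_kj1|lt_j1k].
  have -> : k i = j + 1 by apply/eqP; rewrite eq_le le_kj1; lia.
  exact/esym/sum_subball_eq.
under eq_bigr => e _ do rewrite eq_sym.
exact/esym/sum_subball_eq.
Qed.

Lemma cover_mass_split m c j : is_Qp p c ->
  cover_mass m c j = \sum_(e < p) cover_mass m (subball c j e) (j + 1).
Proof.
move=> c_Qp; rewrite /cover_mass exchange_big /=.
by apply: eq_bigr => i _; apply: ball_mass_split.
Qed.

Lemma cover_mass_mono m M c j : (m <= M)%N -> cover_mass m c j <= cover_mass M c j.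
Proof.
move=> le_mM; rewrite /cover_mass -(subnKC le_mM) big_split_ord /= lerDl.
by apply: sumr_ge0 => i _; apply: ball_mass_ge0.
Qed.

Lemma ball_mass_le_cover i c j : ball_mass i c j <= cover_mass i.+1 c j.
Proof.
rewrite /cover_mass big_ord_recr /= lerDr.
by apply: sumr_ge0 => l _; apply: ball_mass_ge0.
Qed.

(* If every subball were covered, the masses of the first [M] balls of the cover
   inside them would add up to the mass of the whole ball. *)
Lemma uncovered_subball c j : is_Qp p c -> uncovered c j ->
  exists e, uncovered (subball c j e) (j + 1).
Proof.
move=> c_Qp unc; apply: contrapT => /forallNP covered.
have heavy (e : 'I_p) :
    exists m, ppow p (- (j + 1)) <= cover_mass m (subball c j e) (j + 1).
  by have /existsNP[m /negP] := covered e; rewrite -leNgt; exists m.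
pose M := (\max_(e < p) sval (cid (heavy e)))%N.
have := unc M; rewrite (cover_mass_split _ _ c_Qp) ltNge => /negP; apply.
have -> : ppow p (- j) = \sum_(e < p) ppow p (- (j + 1)).
  by rewrite sumr_const card_ord ppow_split.
apply: ler_sum => e _.
have le_mM : (sval (cid (heavy e)) <= M)%N := leq_bigmax e.
exact: le_trans (svalP (cid (heavy e))) (cover_mass_mono _ _ le_mM).
Qed.

Definition next_ball c j : Qpseq :=
  if pselect (exists e, uncovered (subball c j e) (j + 1)) is left ex
  then subball c j (sval (cid ex)) else c.

Lemma is_Qp_next_ball c j : is_Qp p c -> is_Qp p (next_ball c j).
Proof. by move=> c_Qp; rewrite /next_ball; case: pselect => // ex; apply: is_Qp_subball. Qed.

Lemma next_ball_low c j l : is_Qp p c -> l <= j -> next_ball c j l = c l.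
Proof.
by move=> c_Qp le_lj; rewrite /next_ball; case: pselect => // ex; apply: subball_low.
Qed.

Lemma uncovered_next_ball c j : is_Qp p c -> uncovered c j ->
  uncovered (next_ball c j) (j + 1).
Proof.
move=> c_Qp unc; rewrite /next_ball; case: pselect => [ex|]; first exact: svalP (cid ex).
by have := uncovered_subball c_Qp unc.
Qed.

Fixpoint nested_ball d (K : int) (n : nat) : Qpseq :=
  if n is n'.+1 then next_ball (nested_ball d K n') (K + n'%:Z) else d.

Lemma is_Qp_nested_ball d (K : int) (n : nat) :
  is_Qp p d -> is_Qp p (nested_ball d K n).
Proof. by move=> d_Qp; elim: n => //= n IHn; apply: is_Qp_next_ball. Qed.

Lemma uncovered_nested_ball d (K : int) (n : nat) : is_Qp p d -> uncovered d K ->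
  uncovered (nested_ball d K n) (K + n).
Proof.
move=> d_Qp unc; elim: n => [|n IHn]; first by rewrite addr0.
have -> : K + n.+1 = K + n + 1 by rewrite -addn1 PoszD addrA.
apply: uncovered_next_ball => //.
exact: is_Qp_nested_ball.
Qed.

Lemma nested_ball_stable d (K : int) (n m : nat) (l : int) :
  is_Qp p d -> (n <= m)%N -> l <= K + n -> nested_ball d K m l = nested_ball d K n l.
Proof.
move=> d_Qp le_nm le_l; rewrite -(subnKC le_nm); elim: (m - n)%N => [|i IHi].
  by rewrite addn0.
rewrite addnS /= next_ball_low ?IHi //; first exact: is_Qp_nested_ball.
by rewrite (le_trans le_l) // PoszD lerD2l lerDl.
Qed.

Definition nested_limit d (K : int) : Qpseq := fun l => nested_ball d K `|l - K| l.

Lemma nested_limitE d (K : int) (n : nat) (l : int) : is_Qp p d -> l <= K + n ->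
  nested_limit d K l = nested_ball d K n l.
Proof.
have le_dist : l <= K + `|l - K|%N by rewrite -lerBlDl; case: (l - K).
move=> d_Qp le_l; rewrite /nested_limit.
have le_min : l <= K + minn `|l - K| n by case: leqP.
rewrite (nested_ball_stable d_Qp (geq_minl _ n) le_min).
by rewrite (nested_ball_stable d_Qp (geq_minr _ n) le_min).
Qed.

Lemma is_Qp_nested_limit d (K : int) : is_Qp p d -> is_Qp p (nested_limit d K).
Proof.
move=> d_Qp.
have above (l : int) : exists n : nat, l + 1 <= K + n.
  by exists `|(l + 1 - K)%R|%N; rewrite -lerBlDl; case: (l + 1 - K).
have at_level (l : int) : exists2 n, nested_limit d K l = nested_ball d K n l
                           & nested_limit d K (l + 1) = nested_ball d K n (l + 1).
  have [n le_l1] := above l; exists n; apply: nested_limitE => //.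
  exact: le_trans (lerDl l 1) le_l1.
have c_Qp n := is_Qp_nested_ball K n d_Qp.
split=> [l|l|l|].
- by have [n -> _] := at_level l; apply: Qp_Zinvp.
- by have [n -> _] := at_level l; apply: Qp_rng.
- by have [n -> ->] := at_level l; apply: Qp_cong.
- case: (d_Qp) => _ _ _ [N d0]; exists (Num.min N K) => l; rewrite le_min => /andP[lN lK].
  have -> : nested_limit d K l = nested_ball d K 0 l by apply: nested_limitE; rewrite ?addr0.
  exact: d0.
Qed.

Lemma uncovered_point d (K : int) : is_Qp p d -> uncovered d K ->
  exists2 x, ball p d K x & forall i, ~ ball p (a i) (k i) x.
Proof.
move=> d_Qp unc; exists (nested_limit d K).
  apply/(ballP p_gt0 _ _ d_Qp); split; first exact: is_Qp_nested_limit.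
  by apply: (nested_limitE (n := 0)); rewrite ?addr0.
move=> i /(ballP p_gt0 _ _ (a_Qp i)) [_ x_ki].
pose n := `|k i - K|%N.
have le_kn : k i <= K + n by rewrite -lerBlDl /n; case: (k i - K).
have := le_lt_trans (ball_mass_le_cover i _ _) (uncovered_nested_ball n d_Qp unc i.+1).
by rewrite /ball_mass le_kn -(nested_limitE d_Qp le_kn) x_ki eqxx ltxx.
Qed.

End BallsAreNotNull.

Lemma haar_null_ball p (N : Qpseq -> Prop) d K : (0 < p)%N ->
  haar_null p N -> is_Qp p d -> exists2 x, ball p d K x & ~ N x.
Proof.
move=> p_gt0 N_null d_Qp; have P0 := ppow_gt0 p_gt0 (- K).
have [a [k [a_Qp N_cover mass_le]]] := N_null _ (divr_gt0 P0 (ltr0n _ 2)).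
have [|x x_ball x_out] := @uncovered_point p p_gt0 a k a_Qp d K d_Qp.
  move=> m; apply: le_lt_trans (le_trans _ (mass_le m)) _; last by lra.
  by apply: ler_sum => i _; apply: ball_mass_le.
by exists x => // /N_cover[i]; apply: x_out.
Qed.

Section EmptyIsNull.
Variable p : nat.
Hypothesis p_gt1 : (1 < p)%N.
Let p_gt0 : (0 < p)%N := ltnW p_gt1.

Lemma ppow_small eps : 0 < eps -> exists K : nat, ppow p (- K%:Z) <= eps.
Proof.
move=> eps_gt0; exists `|Num.ceil eps^-1|%N.
set K := `|_|%N; have inv_gt0 : 0 < eps^-1 by rewrite invr_gt0.
have le_K : eps^-1 <= K%:R by rewrite natr_absz ger0_norm ?ceil_ge // ceil_ge0; lra.
have lt_K : (K%:R : rat) < (p ^ K)%N%:R by rewrite ltr_nat ltn_expl.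
rewrite ppowN // -[ppow _ _]/(p%:R ^+ K) -natrX -[eps]invrK.
by rewrite lef_pV2 ?posrE ?invr_gt0 ?ltr0n ?expn_gt0 ?p_gt0 // ltW ?(le_lt_trans le_K).
Qed.

Lemma sum_ppow_le (K : int) m :
  \sum_(i < m) ppow p (- (K + i.+1%:Z)) <= ppow p (- K).
Proof.
suff tail : \sum_(i < m) ppow p (- (K + i.+1%:Z)) + ppow p (- (K + m%:Z)) <= ppow p (- K).
  by apply: le_trans tail; rewrite lerDl ltW ?ppow_gt0.
elim: m => [|m IHm]; first by rewrite big_ord0 add0r addr0.
rewrite big_ord_recr /= -addrA; apply: le_trans IHm; rewrite lerD2l.
have -> : K + m.+1%:Z = K + m%:Z + 1 by rewrite -[m.+1]addn1 PoszD addrA.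
rewrite (ppow_split p_gt0 (K + m%:Z)).
by rewrite -mulr2n ler_wpMn2l // ltW // ppow_gt0.
Qed.

Lemma haar_null_empty (N : Qpseq -> Prop) : (forall x, ~ N x) -> haar_null p N.
Proof.
move=> N0 eps eps_gt0; have [K le_K] := ppow_small eps_gt0.
exists (fun=> qofnat p 0), (fun i => K%:Z + i.+1%:Z); split=> [i|x /N0 []|m].
  exact: is_Qp_qofnat.
exact: le_trans (sum_ppow_le _ _) le_K.
Qed.

End EmptyIsNull.

Section ZmodArithmetic.
Variable n : nat.
Hypothesis n_gt1 : (1 < n)%N.
Implicit Types X Y : 'Z_n.

Lemma Zn_val_lt X : (val X < n)%N.
Proof. by have := ltn_ord X; rewrite [X in (_ < X)%N]Zp_cast. Qed.

Lemma Zn_val_inj X Y : (val X)%:R = (val Y)%:R :> rat -> X = Y.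
Proof. by move/eqP; rewrite eqr_nat => /eqP; apply: val_inj. Qed.

Lemma Zn_of_nat m : (m < n)%N -> exists X : 'Z_n, val X = m.
Proof.
by move=> lt_mn; exists m%:R; apply: etrans (val_Zp_nat n_gt1 m) _; rewrite modn_small.
Qed.

Lemma addm_oppm_Zn X Y :
  addm n%:R (val X)%:R (oppm n%:R (val Y)%:R) = (val (X - Y))%:R :> rat.
Proof.
rewrite /=; set x := nat_of_ord X; set y := nat_of_ord Y.
have [ltx lty] : (x < n)%N /\ (y < n)%N by split; apply: Zn_val_lt.
clearbody x y; rewrite (Zp_cast n_gt1).
rewrite /addm /oppm pnatr_eq0; case: eqP => [->|/eqP ney].
  by rewrite subn0 modnn addn0 addr0 modn_small // ifT // ltr_nat.
rewrite [((n - y) %% n)%N]modn_small; last lia.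
rewrite -natrB ?(ltnW lty) // -natrD ltr_nat.
case: ltnP => lt_sum; first by rewrite modn_small.
by rewrite -natrB // -[in RHS](subnK lt_sum) modnDr modn_small //; lia.
Qed.

Lemma addm_fracr (r : rat) X Y : 0 <= r < 1 ->
  addm n%:R (r + (val X)%:R) (oppm n%:R (val Y)%:R) = r + (val (X - Y))%:R.
Proof.
have lt_nat (u v : nat) : (u < v)%N -> u%:R + 1 <= v%:R :> rat.
  by rewrite natr1 ler_nat.
move=> r_rng; rewrite addm_fracl ?addm_oppm_Zn //.
- exact/lt_nat/Zn_val_lt.
- by apply/andP; split; [exact: ler0n | rewrite ltr_nat Zn_val_lt].
- by rewrite ltr_nat => /lt_nat.
Qed.

End ZmodArithmetic.

Lemma eq_exists_unique (T : Type) (P Q : T -> Prop) :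
  (forall t, P t <-> Q t) -> (exists! t, P t) -> exists! t, Q t.
Proof. by move=> PQ [t [/PQ Qt t_uniq]]; exists t; split=> // t' /PQ /t_uniq. Qed.

Section Tilings.
Variables (p gamma : nat) (C : {set 'Z_(p ^ gamma)}).
Hypotheses (p_gt1 : (1 < p)%N) (gamma_gt0 : (0 < gamma)%N).
Local Notation n := (p ^ gamma)%N.
Local Notation Om := (Omega p gamma C).
Implicit Types (x t w : Qpseq) (X : 'Z_n).

Let p_gt0 : (0 < p)%N := ltnW p_gt1.
Let n_gt1 : (1 < n)%N := leq_ltn_trans gamma_gt0 (ltn_expl _ p_gt1).

Lemma ppow_gamma : ppow p gamma = n%:R.
Proof. by rewrite natrX. Qed.

Lemma Zn_val_rng X : 0 <= ((val X)%:R : rat) < ppow p gamma.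
Proof. by rewrite ppow_gamma ler0n ltr_nat Zn_val_lt. Qed.

Lemma level_decomp x : is_Qp p x -> exists X, x gamma = x 0 + (val X)%:R.
Proof.
move=> x_Qp; have le0g : (0 : int) <= gamma by [].
have x0 : x 0 = modq (x gamma) 1 by rewrite (Qp_down p_gt0 x_Qp le0g) ppow0.
have diff_int : x gamma - x 0 \is a Num.int by rewrite x0 -[_ - _]divr1 modq_diff.
have [/andP[? x0_lt] /andP[? xg_lt]] := (Qp_rng 0 x_Qp, Qp_rng gamma x_Qp).
rewrite ppow0 in x0_lt; rewrite ppow_gamma in xg_lt.
have diff_ge0 : 0 <= x gamma - x 0.
  by apply: int_le_of_lt_add1; rewrite ?rpred0 //; lra.
have /natrP[m e_m] : x gamma - x 0 \is a Num.nat by rewrite natrEint diff_int.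
have [|X e_X] := @Zn_of_nat n n_gt1 m; first by rewrite -(ltr_nat rat) -e_m; lra.
by exists X; rewrite e_X -e_m; ring.
Qed.

Lemma level_nat_Zp x m : is_Qp p x -> x gamma = m%:R -> x 0 = 0.
Proof.
move=> x_Qp x_m; have [X x_X] := level_decomp x_Qp.
have [] // := @frac_nat_inj (x 0) 0 (val X) m; rewrite ?lexx ?ltr01 //.
  by rewrite -(ppow0 p) Qp_rng.
by rewrite add0r -x_m.
Qed.

Lemma OmegaP w : Om w <-> is_Qp p w /\ exists2 c, c \in C & w gamma = (val c)%:R.
Proof.
have ballE (c : 'Z_n) :
    ball p (qofnat p (val c)) gamma w <-> is_Qp p w /\ w gamma = (val c)%:R.
  rewrite -[(val c)%:R](qofnat_small (Zn_val_lt n_gt1 c)).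
  exact: ballP (is_Qp_qofnat p_gt0 _).
split=> [[c [cC /ballE[w_Qp w_c]]]|[w_Qp [c cC w_c]]]; first by split=> //; exists c.
by exists c; split; rewrite ?ballE.
Qed.

Lemma Omega_in_Zp w : Om w -> in_Zp p w.
Proof. by case/OmegaP=> w_Qp [c _ w_c]; split=> //; apply: level_nat_Zp w_c. Qed.

(* The heart of the correspondence: modulo [p^gamma Z_p], translating by [t]
   only sees the level-[gamma] residue of [t]. *)
Lemma Omega_qsub x t r X : is_Qp p x -> is_Qp p t -> 0 <= r < 1 ->
  x gamma = r + (val X)%:R ->
  Om (qsub p x t) <-> exists2 c, c \in C & t gamma = r + (val (X - c))%:R.
Proof.
move=> x_Qp t_Qp r_rng x_X.
have level_eq (c : 'Z_n) :
    qsub p x t gamma = (val c)%:R <-> t gamma = r + (val (X - c))%:R.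
  by rewrite qsubE addm_sub_eq ?Qp_rng ?Zn_val_rng // x_X ppow_gamma addm_fracr.
rewrite OmegaP; split=> [[_ [c cC /level_eq]]|[c cC /level_eq]]; first by exists c.
by split; [exact: is_Qp_sub | exists c].
Qed.

Lemma Omega_translate x t : is_Qp p x -> is_Qp p t ->
  (exists w, Om w /\ x = qadd p w t) <-> Om (qsub p x t).
Proof.
move=> x_Qp t_Qp; split=> [[w [w_Om ->]]|xt_Om].
  by rewrite qsub_addK //; case/OmegaP: w_Om.
by exists (qsub p x t); rewrite qadd_subK.
Qed.

Lemma tiles_Zmod_of_translates (T : Qpseq -> Prop) :
  (forall t, T t -> is_Qp p t) ->
  (forall X, exists x, [/\ is_Qp p x, x gamma = (val X)%:R
                         & exists! t, T t /\ Om (qsub p x t)]) ->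
  tiles_Zmod n C.
Proof.
move=> T_Qp uniq_translate.
exists [set s | `[< exists2 t, T t & t gamma = (val s)%:R >]] => X.
have [x [x_Qp x_X [t [[Tt xt_Om] t_uniq]]]] := uniq_translate X.
have Om_sub t' : is_Qp p t' ->
    Om (qsub p x t') <-> exists2 c, c \in C & t' gamma = 0 + (val (X - c))%:R.
  by move=> t'_Qp; apply: Omega_qsub; rewrite ?lexx ?ltr01 ?add0r.
have [c cC t_c] := (Om_sub t (T_Qp t Tt)).1 xt_Om; rewrite add0r in t_c.
exists (c, X - c); split.
  split=> //=; last by rewrite addrC subrK.
  by rewrite inE; apply/asboolP; exists t.
move=> [c' s'] [/= c'C /[1!inE] /asboolP[t' Tt' t'_s] X_cs].
have t_t' : t = t'.
  apply: t_uniq; split=> //; apply/(Om_sub t' (T_Qp t' Tt')).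
  by exists c'; rewrite // add0r t'_s X_cs addrAC subrr add0r.
have s_eq : s' = X - c by apply: Zn_val_inj; rewrite -t'_s -t_c t_t'.
suff -> : c' = c by rewrite s_eq.
by apply: (addIr s'); rewrite -X_cs s_eq addrC subrK.
Qed.

Lemma tiles_Zmod_of_tiles_Zp : tiles_Zp p Om -> tiles_Zmod n C.
Proof.
move=> [T [T_Zp _ tiling]].
apply: (tiles_Zmod_of_translates (T := T)) => [t /T_Zp[]//|X].
have X_Qp := is_Qp_qofnat p_gt0 (val X).
exists (qofnat p (val X)); split=> //; first by rewrite qofnat_small ?Zn_val_lt.
apply: eq_exists_unique (tiling _ (conj X_Qp (qofnat0 _ _))) => t.
by split=> -[Tt xt]; split; rewrite // -Omega_translate // in xt *; case: (T_Zp _ Tt).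
Qed.

Lemma tiles_Zmod_of_tiles_Qp : tiles_Qp p Om -> tiles_Zmod n C.
Proof.
move=> [T [T_Qp N_null]]; apply: (tiles_Zmod_of_translates T_Qp) => X.
have X_Qp := is_Qp_qofnat p_gt0 (val X).
have [x x_ball x_good] := haar_null_ball gamma p_gt0 N_null X_Qp.
have [x_Qp x_X] := (ballP p_gt0 _ _ X_Qp).1 x_ball.
exists x; split=> //; first by rewrite x_X qofnat_small ?Zn_val_lt.
by apply: contrapT => not_uniq; apply: x_good.
Qed.

(* The translation set [{qofrat (r + s) | F r, s \in S}]: [S] accounts for the
   level-[gamma] residue, the fractional part [r] for the rest of [Q_p / Z_p]. *)
Definition translates (F : rat -> Prop) (S : {set 'Z_n}) : Qpseq -> Prop :=
  fun t => exists r s, [/\ F r, s \in S & t = qofrat p (r + (val s)%:R)].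

Lemma qofrat_frac_level r X : 0 <= r < 1 ->
  qofrat p (r + (val X)%:R) gamma = r + (val X)%:R.
Proof.
move=> /andP[? ?]; rewrite /qofrat modq_small // ppow_gamma.
have : (val X)%:R + 1 <= n%:R :> rat by rewrite natr1 ler_nat Zn_val_lt.
have : 0 <= (val X)%:R :> rat by exact: ler0n.
by move=> ? ?; apply/andP; split; lra.
Qed.

Lemma qofrat_frac0 r X : 0 <= r < 1 -> qofrat p (r + (val X)%:R) 0 = r.
Proof.
move=> r_rng; rewrite /qofrat ppow0 (modq_char r_rng) //.
by rewrite divr1 addrAC subrr add0r natr_int.
Qed.

Section FractionalParts.
Variable F : rat -> Prop.
Hypothesis F_frac : forall r, F r -> 0 <= r < 1 /\ Zinvp p r.

Lemma is_Qp_translates (S : {set 'Z_n}) t : translates F S t -> is_Qp p t.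
Proof.
move=> [r [s [/F_frac[_ rZ] _ ->]]].
by apply: (is_Qp_qofrat p_gt0); apply/Zinvp_add/Zinvp_int/natr_int.
Qed.

Lemma uniq_translate (S : {set 'Z_n}) :
  (forall X, exists! cs : 'Z_n * 'Z_n, [/\ cs.1 \in C, cs.2 \in S & X = cs.1 + cs.2]) ->
  forall x, is_Qp p x -> F (x 0) -> exists! t, translates F S t /\ Om (qsub p x t).
Proof.
move=> S_tiles x x_Qp Fx0; have [x0_rng _] := F_frac Fx0.
have [X x_X] := level_decomp x_Qp.
have [[c s] [[/= cC sS X_cs] cs_uniq]] := S_tiles X.
have t_Qp : is_Qp p (qofrat p (x 0 + (val s)%:R)).
  by apply: is_Qp_translates; exists (x 0), s.
exists (qofrat p (x 0 + (val s)%:R)); split.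
  split; first by exists (x 0), s.
  apply/(Omega_qsub x_Qp t_Qp x0_rng x_X); exists c => //.
  by rewrite qofrat_frac_level // X_cs addrAC subrr add0r.
move=> t' [[r' [s' [Fr' s'S ->]]] xt'_Om]; have [r'_rng _] := F_frac Fr'.
have t'_Qp : is_Qp p (qofrat p (r' + (val s')%:R)).
  by apply: is_Qp_translates; exists r', s'.
have [c' c'C] := (Omega_qsub x_Qp t'_Qp x0_rng x_X).1 xt'_Om.
rewrite qofrat_frac_level // => /frac_nat_inj[] // -> /val_inj s'_eq.
have [_ <-] // : (c, s) = (c', s') by apply: cs_uniq; split; rewrite //= s'_eq addrC subrK.
Qed.

End FractionalParts.

Lemma tiles_Zp_of_tiles_Zmod : tiles_Zmod n C -> tiles_Zp p Om.
Proof.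
move=> [S S_tiles]; pose F (r : rat) := r = 0.
have F_frac r : F r -> 0 <= r < 1 /\ Zinvp p r.
  by move->; rewrite lexx ltr01; split=> //; apply/Zinvp_int/rpred0.
have T_Zp t : translates F S t -> in_Zp p t.
  move=> t_tr; split; first exact: is_Qp_translates t_tr.
  by case: t_tr => r [s [-> _ ->]]; rewrite qofrat_frac0 // lexx ltr01.
exists (translates F S); split=> // [t w t_tr /Omega_in_Zp[w_Qp w0]|x [x_Qp x0]].
  have [t_Qp t0] := T_Zp t t_tr; split; first exact: is_Qp_add.
  by rewrite qaddE w0 t0 ppow0 addm0 ?lexx ?ltr01.
apply: eq_exists_unique (uniq_translate F_frac S_tiles x_Qp x0) => t.
by split=> -[t_tr xt]; split; rewrite // ?Omega_translate // in xt *; case: (T_Zp t t_tr).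
Qed.

Lemma tiles_Qp_of_tiles_Zmod : tiles_Zmod n C -> tiles_Qp p Om.
Proof.
move=> [S S_tiles]; pose F (r : rat) := 0 <= r < 1 /\ Zinvp p r.
exists (translates F S); split; first exact: is_Qp_translates.
apply: haar_null_empty => // x [x_Qp]; apply; apply: uniq_translate => //.
by split; [rewrite -(ppow0 p) Qp_rng | exact: Qp_Zinvp].
Qed.

End Tilings.

Unset Implicit Arguments.

Theorem lemma2p10 (p : nat) (hp : prime p) (gamma : nat) (hg : (1 <= gamma)%N)
  (C : {set 'Z_(p ^ gamma)%N}) (hC : C != set0) :
  (tiles_Zp p (Omega p gamma C) <-> tiles_Zmod (p ^ gamma)%N C) /\
  (tiles_Zmod (p ^ gamma)%N C <-> tiles_Qp p (Omega p gamma C)).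
Proof.
have p_gt1 := prime_gt1 hp.
split; split.
- exact: tiles_Zmod_of_tiles_Zp.
- exact: tiles_Zp_of_tiles_Zmod.
- exact: tiles_Qp_of_tiles_Zmod.
- exact: tiles_Zmod_of_tiles_Qp.
Qed.
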